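(* Let $S>0$, $d\ge1$, $\Delta s=S/(d+1)$ and $\boldsymbol L$ the $d\times d$ tridiagonal matrix $\Delta s^{-2}\,\mathrm{tridiag}(1,-2,1)$. Consider the linear Hamiltonian system in $(\boldsymbol u,\boldsymbol p)\in\mathbb{R}^d\times\mathbb{R}^d$ $$\dot{\boldsymbol u}=-\boldsymbol L^{-1}\boldsymbol p,\qquad \dot{\boldsymbol p}=\boldsymbol L\boldsymbol u-\boldsymbol u,$$ and for $c\in[0,1]$ the Strang splitting integrator $\psi_h=\varphi^{(B)}_{h/2}\circ\varphi^{(A)}_h\circ\varphi^{(B)}_{h/2}$, where $\varphi^{(A)}_t$ is the flow of $\dot{\boldsymbol u}=-\boldsymbol L^{-1}\boldsymbol p,\ \dot{\boldsymbol p}=c^2\boldsymbol L\boldsymbol u$ and $\varphi^{(B)}_t$ the flow of $\dot{\boldsymbol u}=0,\ \dot{\boldsymbol p}=(1-c^2)\boldsymbol L\boldsymbol u-\boldsymbol u$. Let $\omega_1^2=\frac4{\Delta s^2}\sin^2\!\big(\frac\pi{2(d+1)}\big)$ be the smallest eigenvalue of $-\boldsymbol L$. If $h>0$ satisfies $$ch+2\arctan\!\Big(\frac{h(1+(1-c^2)\omega_1^2)}{2c\omega_1^2}\Big)<\pi\ \text{ if }c\in(0,1],\qquad h<\frac{2\omega_1}{\sqrt{1+\omega_1^2}}\ \text{ if }c=0,$$ then the integrator is stable, i.e. the powers $\psi_h^n$, $n=0,1,2,\dots$, are uniformly bounded.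
   Context: This is the integrator used in preconditioned HMC (mass matrix $-\boldsymbol L$) for the discretized Ornstein–Uhlenbeck bridge on $[0,S]$ with homogeneous Dirichlet conditions; $c=0$ gives velocity Verlet. *)

From Stdlib Require Import Reals ClassicalEpsilon.
Open Scope R_scope.

(* Vectors in R^d are represented as functions nat -> R, of which only the
   components 0 .. d-1 are meaningful.  A phase-space state is a pair (u, p). *)
Definition vec := nat -> R.
Definition state := (vec * vec)%type.

Definition ds (Sl : R) (d : nat) : R := Sl / INR (d + 1)%nat.

(* L u  with  L = Delta s^{-2} tridiag(1,-2,1), homogeneous Dirichlet b.c. *)
Definition Lmul (Sl : R) (d : nat) (u : vec) : vec := fun i =>
  ((match i with O => 0 | S i' => u i' end) - 2 * u i
   + (if Nat.ltb (i + 1)%nat d then u (i + 1)%nat else 0)) / (ds Sl d ^ 2).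

(* L^{-1} p : the (unique, L being invertible) vector v of R^d with L v = p. *)
Definition Linv (Sl : R) (d : nat) (p : vec) : vec :=
  epsilon (inhabits (fun _ : nat => 0))
    (fun v : vec => forall i, (i < d)%nat -> Lmul Sl d v i = p i).

Definition fieldA (Sl : R) (d : nat) (c : R) (x : state) : state :=
  (fun i => - Linv Sl d (snd x) i, fun i => c ^ 2 * Lmul Sl d (fst x) i).

Definition fieldB (Sl : R) (d : nat) (c : R) (x : state) : state :=
  (fun _ => 0, fun i => (1 - c ^ 2) * Lmul Sl d (fst x) i - fst x i).

Definition is_flow (d : nat) (f : state -> state) (F : R -> state -> state) : Prop :=
  forall x : state,
    (forall i, (i < d)%nat -> fst (F 0 x) i = fst x i /\ snd (F 0 x) i = snd x i) /\
    (forall t i, (i < d)%nat ->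
       derivable_pt_lim (fun s => fst (F s x) i) t (fst (f (F t x)) i) /\
       derivable_pt_lim (fun s => snd (F s x) i) t (snd (f (F t x)) i)).

Definition strang (FA FB : R -> state -> state) (h : R) (x : state) : state :=
  FB (h / 2) (FA h (FB (h / 2) x)).

Fixpoint rsum (n : nat) (f : nat -> R) : R :=
  match n with O => 0 | S n' => rsum n' f + f n' end.

Definition snorm (d : nat) (x : state) : R :=
  rsum d (fun i => Rabs (fst x i) + Rabs (snd x i)).

Definition omega1 (Sl : R) (d : nat) : R :=
  2 / ds Sl d * sin (PI / (2 * INR (d + 1)%nat)).

From Stdlib Require Import Reals Lra Lia ClassicalEpsilon.
Open Scope R_scope.

(* The sine vectors v_k(i) = sin ((i+1)(k+1) pi/(d+1)) diagonalise L with
   eigenvalues lambda_k = (2 cos ((k+1) pi/(d+1)) - 2) / ds^2 < 0, and they are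
   orthogonal, so both split flows act on the sine coefficients (a_k, b_k) of
   (u, p) mode by mode.  One Strang step acts on a mode by a 2x2 matrix
   [[mu, m12], [m21, mu]] of determinant 1.  If mu^2 < 1 then m12 > 0 > m21, the
   positive definite form -m21 a^2 + m12 b^2 is invariant, and all iterates of
   the mode stay bounded.  With w = -lambda_k >= omega_1^2 one finds
   mu = cos (ch) - A sin (ch), A = h (1 + (1 - c^2) w) / (2 c w) <= A(omega_1^2),
   i.e. mu = cos (ch + atan A) / cos (atan A), so the step-size condition forces
   mu^2 < 1 for every mode; for c = 0, mu = 1 - h^2 (1 + w) / (2 w). *)

Lemma rsum_ext n f g : (forall i, (i < n)%nat -> f i = g i) -> rsum n f = rsum n g.
Proof.
  induction n as [|n IH]; simpl; intros H; auto.
  rewrite IH by (intros; apply H; lia). rewrite (H n) by lia. reflexivity.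
Qed.

Lemma rsum_plus n f g : rsum n (fun i => f i + g i) = rsum n f + rsum n g.
Proof. induction n as [|n IH]; simpl; [lra | rewrite IH; lra]. Qed.

Lemma rsum_scal n r f : rsum n (fun i => r * f i) = r * rsum n f.
Proof. induction n as [|n IH]; simpl; [lra | rewrite IH; lra]. Qed.

Lemma rsum_minus n f g : rsum n (fun i => f i - g i) = rsum n f - rsum n g.
Proof. induction n as [|n IH]; simpl; [lra | rewrite IH; lra]. Qed.

Lemma rsum_const n r : rsum n (fun _ => r) = INR n * r.
Proof. induction n as [|n IH]; simpl rsum; [simpl; lra | rewrite IH, S_INR; lra]. Qed.

Lemma rsum_le n f g : (forall i, (i < n)%nat -> f i <= g i) -> rsum n f <= rsum n g.
Proof.
  induction n as [|n IH]; simpl; intros H; [lra|].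
  assert (rsum n f <= rsum n g) by (apply IH; intros; apply H; lia).
  assert (f n <= g n) by (apply H; lia).
  lra.
Qed.

Lemma rsum_abs n f : Rabs (rsum n f) <= rsum n (fun i => Rabs (f i)).
Proof.
  induction n as [|n IH]; simpl; [rewrite Rabs_R0; lra|].
  eapply Rle_trans; [apply Rabs_triang | lra].
Qed.

Lemma rsum_swap n m (F : nat -> nat -> R) :
  rsum n (fun i => rsum m (fun j => F i j)) = rsum m (fun j => rsum n (fun i => F i j)).
Proof.
  induction n as [|n IH]; simpl.
  - induction m; simpl; lra.
  - rewrite IH, <- rsum_plus; reflexivity.
Qed.

Lemma rsum_shift n g : rsum (S n) g = g O + rsum n (fun k => g (S k)).
Proof.
  induction n as [|n IH]; [simpl; lra|].
  change (rsum (S (S n)) g) with (rsum (S n) g + g (S n)).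
  rewrite IH; simpl; lra.
Qed.

Lemma rsum_delta n i f : (i < n)%nat ->
  rsum n (fun j => if Nat.eqb i j then f j else 0) = f i.
Proof.
  induction n as [|n IH]; intros Hi; [lia|]. simpl.
  destruct (Nat.eq_dec i n) as [->|Hne].
  - rewrite Nat.eqb_refl, (rsum_ext _ _ (fun _ => 0)), rsum_const; [lra|].
    intros j Hj. destruct (Nat.eqb_spec n j); [lia | reflexivity].
  - rewrite IH by lia. destruct (Nat.eqb_spec i n); [lia | lra].
Qed.

Lemma rsum_derivable n (c : nat -> R) (F : nat -> R -> R) (F' : nat -> R) t :
  (forall i, (i < n)%nat -> derivable_pt_lim (F i) t (F' i)) ->
  derivable_pt_lim (fun s => rsum n (fun i => c i * F i s)) t (rsum n (fun i => c i * F' i)).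
Proof.
  induction n as [|n IH]; intros H; simpl.
  - apply (derivable_pt_lim_const 0).
  - apply (derivable_pt_lim_plus (fun s => rsum n (fun i => c i * F i s)) (fun s => c n * F n s)).
    + apply IH; intros; apply H; lia.
    + apply derivable_pt_lim_scal, H; lia.
Qed.

(** * The discrete sine transform *)

Lemma sin_INR_mul_PI n : sin (INR n * PI) = 0.
Proof. apply sin_eq_0_1. exists (Z.of_nat n). rewrite <- INR_IZR_INZ; reflexivity. Qed.

Lemma sin_neq0_of_Rabs_lt_PI y : 0 < Rabs y < PI -> sin y <> 0.
Proof.
  intros [Hpos Hlt]. destruct (Rcase_abs y) as [Hy|Hy].
  - rewrite Rabs_left in * by exact Hy.
    pose proof (sin_gt_0 (- y)) as Hs. rewrite sin_neg in Hs. lra.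
  - rewrite Rabs_right in * by exact Hy.
    pose proof (sin_gt_0 y). lra.
Qed.

Lemma sin_half_mul_rsum_cos x n :
  2 * sin (x / 2) * rsum (S n) (fun k => cos (INR k * x)) = sin ((INR n + /2) * x) + sin (x / 2).
Proof.
  induction n as [|n IH].
  - simpl. rewrite Rmult_0_l, cos_0. replace ((0 + /2) * x) with (x / 2) by field. lra.
  - change (rsum (S (S n)) (fun k => cos (INR k * x))) with
      (rsum (S n) (fun k => cos (INR k * x)) + cos (INR (S n) * x)).
    rewrite Rmult_plus_distr_l, IH, S_INR.
    replace ((INR n + 1 + /2) * x) with ((INR n + 1) * x + x / 2) by field.
    replace ((INR n + /2) * x) with ((INR n + 1) * x - x / 2) by field.
    rewrite sin_plus, sin_minus. ring.
Qed.

Definition theta (d : nat) : R := PI / INR (d + 1).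

Lemma INR_succ_pos d : 0 < INR (d + 1).
Proof. apply lt_0_INR; lia. Qed.

Lemma theta_pos d : 0 < theta d.
Proof. apply Rdiv_lt_0_compat; [apply PI_RGT_0 | apply INR_succ_pos]. Qed.

Lemma INR_succ_mul_theta d : INR (d + 1) * theta d = PI.
Proof. unfold theta. field. pose proof (INR_succ_pos d); lra. Qed.

Lemma rsum_cos_multiple_theta d m : 0 < Rabs m < 2 * INR (d + 1) -> sin (m * PI) = 0 ->
  rsum (S d) (fun k => cos (INR k * (m * theta d))) = (1 - cos (m * PI)) / 2.
Proof.
  intros Hm Hsin. pose proof (INR_succ_pos d) as Hd. pose proof (theta_pos d) as Ht.
  assert (Hhalf : sin (m * theta d / 2) <> 0).
  { apply sin_neq0_of_Rabs_lt_PI.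
    rewrite <- (INR_succ_mul_theta d).
    replace (m * theta d / 2) with (m * (theta d / 2)) by field.
    rewrite Rabs_mult, (Rabs_right (theta d / 2)) by lra. nra. }
  pose proof (sin_half_mul_rsum_cos (m * theta d) d) as E.
  replace ((INR d + /2) * (m * theta d)) with (m * PI - m * theta d / 2) in E
    by (rewrite <- (INR_succ_mul_theta d), plus_INR; simpl; field).
  rewrite sin_minus, Hsin in E.
  apply (Rmult_eq_reg_l (2 * sin (m * theta d / 2))); [|lra].
  rewrite E. field.
Qed.

Definition kappa (d k : nat) : R := INR (k + 1) * theta d.

(* [dst d k i] is symmetric in [k] and [i]. *)
Definition dst (d k : nat) : vec := fun i => sin (INR (i + 1) * kappa d k).

Lemma dst_orthogonal d i j : (i < d)%nat -> (j < d)%nat ->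
  rsum d (fun k => dst d k i * dst d k j) = if Nat.eqb i j then INR (d + 1) / 2 else 0.
Proof.
  intros Hi Hj. unfold dst, kappa.
  pose proof (INR_succ_pos d) as Hd. rewrite plus_INR in Hd; simpl in Hd.
  assert (HI : 1 <= INR (i + 1) <= INR d) by (split; [apply (le_INR 1) | apply le_INR]; lia).
  assert (HJ : 1 <= INR (j + 1) <= INR d) by (split; [apply (le_INR 1) | apply le_INR]; lia).
  assert (sI := sin_INR_mul_PI (i + 1)). assert (sJ := sin_INR_mul_PI (j + 1)).
  transitivity (/2 * (rsum (S d) (fun k => cos (INR k * ((INR (i + 1) - INR (j + 1)) * theta d)))
                      - rsum (S d) (fun k => cos (INR k * ((INR (i + 1) + INR (j + 1)) * theta d))))).
  { rewrite <- rsum_minus, <- rsum_scal, rsum_shift. simpl (INR 0).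
    rewrite !Rmult_0_l, cos_0, Rminus_diag, Rmult_0_r, Rplus_0_l.
    apply rsum_ext. intros k _. replace (k + 1)%nat with (S k) by lia.
    set (x := INR (S k) * theta d).
    replace (INR (S k) * ((INR (i + 1) - INR (j + 1)) * theta d))
      with (INR (i + 1) * x - INR (j + 1) * x) by (unfold x; ring).
    replace (INR (S k) * ((INR (i + 1) + INR (j + 1)) * theta d))
      with (INR (i + 1) * x + INR (j + 1) * x) by (unfold x; ring).
    rewrite cos_minus, cos_plus. field. }
  rewrite (rsum_cos_multiple_theta d (INR (i + 1) + INR (j + 1)));
    [| rewrite Rabs_right, (plus_INR d 1) by lra; simpl; lra
     | rewrite Rmult_plus_distr_r, sin_plus, sI, sJ; ring].
  rewrite Rmult_plus_distr_r, cos_plus, sI, Rmult_0_l, Rminus_0_r.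
  destruct (Nat.eqb_spec i j) as [<-|Hij].
  - rewrite Rminus_diag, (rsum_ext _ _ (fun _ => 1))
      by (intros; rewrite Rmult_0_l, Rmult_0_r; apply cos_0).
    rewrite rsum_const, S_INR, (plus_INR d 1).
    pose proof (sin2_cos2 (INR (i + 1) * PI)) as E. unfold Rsqr in E. rewrite sI in E.
    simpl. lra.
  - assert (HIJ : INR (i + 1) <> INR (j + 1)) by (intros E; apply INR_eq in E; lia).
    rewrite (rsum_cos_multiple_theta d (INR (i + 1) - INR (j + 1))).
    + rewrite Rmult_minus_distr_r, cos_minus, sI. field.
    + rewrite (plus_INR d 1). simpl. split; [apply Rabs_pos_lt; lra|]. apply Rabs_def1; lra.
    + rewrite Rmult_minus_distr_r, sin_minus, sI, sJ. ring.
Qed.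

Definition eigval (Sl : R) (d k : nat) : R := (2 * cos (kappa d k) - 2) / ds Sl d ^ 2.

Definition vdot (d : nat) (v u : vec) : R := rsum d (fun i => v i * u i).

Definition coef (d k : nat) (u : vec) : R := vdot d (dst d k) u.

Lemma ds_pos Sl d : 0 < Sl -> 0 < ds Sl d.
Proof. intros. apply Rdiv_lt_0_compat; [assumption | apply INR_succ_pos]. Qed.

Lemma kappa_bounds d k : (k < d)%nat -> 0 < kappa d k <= PI.
Proof.
  intros Hk. pose proof (INR_succ_pos d). split.
  - apply Rmult_lt_0_compat; [apply lt_0_INR; lia | apply theta_pos].
  - rewrite <- (INR_succ_mul_theta d). apply Rmult_le_compat_r.
    + left; apply theta_pos.
    + apply le_INR; lia.
Qed.

Lemma eigval_neg Sl d k : 0 < Sl -> (k < d)%nat -> eigval Sl d k < 0.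
Proof.
  intros HS Hk. destruct (kappa_bounds d k Hk).
  apply Rdiv_neg_pos; [| apply pow_lt, ds_pos; assumption].
  assert (cos (kappa d k) < cos 0); [| rewrite cos_0 in *; lra].
  apply cos_decreasing_1; pose proof PI_RGT_0; lra.
Qed.

Lemma eigval_le_eigval0 Sl d k : 0 < Sl -> (k < d)%nat -> eigval Sl d k <= eigval Sl d 0.
Proof.
  intros HS Hk. apply Rmult_le_compat_r.
  { left. apply Rinv_0_lt_compat, pow_lt, ds_pos; assumption. }
  destruct k as [|k]; [lra|].
  destruct (kappa_bounds d (S k) Hk), (kappa_bounds d 0 ltac:(lia)).
  assert (cos (kappa d (S k)) < cos (kappa d 0)); [| lra].
  apply cos_decreasing_1; try lra.
  apply Rmult_lt_compat_r; [apply theta_pos | apply lt_INR; lia].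
Qed.

Lemma omega1_sqr Sl d : 0 < Sl -> omega1 Sl d ^ 2 = - eigval Sl d 0.
Proof.
  intros HS. pose proof (ds_pos Sl d HS). pose proof (INR_succ_pos d).
  unfold omega1, eigval, kappa, theta.
  replace (INR (0 + 1) * (PI / INR (d + 1))) with (2 * (PI / (2 * INR (d + 1)))) by (simpl; field; lra).
  rewrite cos_2a_sin. field. lra.
Qed.

Lemma Lmul_dst Sl d k i : (i < d)%nat -> Lmul Sl d (dst d k) i = eigval Sl d k * dst d k i.
Proof.
  intros Hi. unfold Lmul, eigval, dst.
  set (K := kappa d k). set (y := INR (i + 1)).
  assert (Hprev : (match i with O => 0 | S i' => sin (INR (i' + 1) * K) end) = sin (y * K - K)).
  { unfold y. destruct i as [|i].
    - simpl. rewrite Rmult_1_l, Rminus_diag, sin_0. reflexivity.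
    - f_equal. replace (S i + 1)%nat with (i + 1 + 1)%nat by lia.
      rewrite (plus_INR (i + 1) 1). simpl. ring. }
  (* the sine vanishes at index d, since (d + 1) kappa is a multiple of PI *)
  assert (Hnext : (if Nat.ltb (i + 1) d then sin (INR (i + 1 + 1) * K) else 0) = sin (y * K + K)).
  { unfold y. replace (INR (i + 1) * K + K) with (INR (i + 1 + 1) * K)
      by (rewrite (plus_INR (i + 1) 1); simpl; ring).
    destruct (Nat.ltb_spec (i + 1) d); [reflexivity|].
    replace (i + 1 + 1)%nat with (d + 1)%nat by lia.
    unfold K, kappa. rewrite Rmult_comm, Rmult_assoc, (Rmult_comm _ (INR (d + 1))), INR_succ_mul_theta.
    symmetry. apply sin_INR_mul_PI. }
  rewrite Hprev, Hnext, sin_minus, sin_plus. unfold Rdiv. ring.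
Qed.

Definition prev_entry (u : vec) (i : nat) : R := match i with O => 0 | S i' => u i' end.

Definition next_entry (n : nat) (u : vec) (i : nat) : R :=
  if Nat.ltb (i + 1) n then u (i + 1)%nat else 0.

Lemma rsum_mul_prev_entry n (u v : vec) :
  rsum (S n) (fun i => v i * prev_entry u i) = rsum n (fun i => v (S i) * u i).
Proof. rewrite rsum_shift. simpl. rewrite Rmult_0_r, Rplus_0_l. reflexivity. Qed.

Lemma rsum_mul_next_entry n (u v : vec) :
  rsum (S n) (fun i => u i * next_entry (S n) v i) = rsum n (fun i => u i * v (S i)).
Proof.
  simpl. unfold next_entry at 2. destruct (Nat.ltb_spec (n + 1) (S n)); [lia|].
  rewrite Rmult_0_r, Rplus_0_r. apply rsum_ext. intros i Hi. unfold next_entry.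
  destruct (Nat.ltb_spec (i + 1) (S n)); [| lia]. rewrite Nat.add_1_r. reflexivity.
Qed.

Lemma Lmul_entries Sl d u i :
  Lmul Sl d u i = (prev_entry u i + next_entry d u i - 2 * u i) / ds Sl d ^ 2.
Proof. unfold Lmul, prev_entry, next_entry. f_equal. ring. Qed.

Lemma vdot_Lmul_sym Sl d u v : vdot d v (Lmul Sl d u) = vdot d (Lmul Sl d v) u.
Proof.
  unfold vdot.
  rewrite (rsum_ext d _ (fun i => / ds Sl d ^ 2 *
             (v i * prev_entry u i + v i * next_entry d u i + (-2) * (v i * u i))))
    by (intros; rewrite Lmul_entries; unfold Rdiv; ring).
  rewrite (rsum_ext d (fun i => Lmul Sl d v i * u i) (fun i => / ds Sl d ^ 2 *
             (u i * next_entry d v i + u i * prev_entry v i + (-2) * (v i * u i))))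
    by (intros; rewrite Lmul_entries; unfold Rdiv; ring).
  rewrite !rsum_scal, !rsum_plus, !rsum_scal. f_equal. f_equal.
  destruct d as [|d]; [simpl; ring|].
  rewrite !rsum_mul_prev_entry, !rsum_mul_next_entry.
  rewrite (rsum_ext d (fun i => v (S i) * u i) (fun i => u i * v (S i))) by (intros; ring).
  rewrite (rsum_ext d (fun i => v i * u (S i)) (fun i => u (S i) * v i)) by (intros; ring).
  ring.
Qed.

Lemma coef_Lmul Sl d k u : coef d k (Lmul Sl d u) = eigval Sl d k * coef d k u.
Proof.
  unfold coef. rewrite vdot_Lmul_sym. unfold vdot. rewrite <- rsum_scal.
  apply rsum_ext. intros. rewrite Lmul_dst by assumption. ring.
Qed.

Lemma dst_inversion d (u : vec) i : (i < d)%nat ->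
  2 / INR (d + 1) * rsum d (fun k => dst d k i * coef d k u) = u i.
Proof.
  intros Hi. unfold coef, vdot.
  rewrite (rsum_ext d _ (fun k => rsum d (fun j => (dst d k i * dst d k j) * u j)))
    by (intros; rewrite <- rsum_scal; apply rsum_ext; intros; ring).
  rewrite rsum_swap.
  rewrite (rsum_ext d _ (fun j => if Nat.eqb i j then INR (d + 1) / 2 * u j else 0)).
  - rewrite rsum_delta by assumption. field. pose proof (INR_succ_pos d); lra.
  - intros j Hj.
    rewrite (rsum_ext d _ (fun k => u j * (dst d k i * dst d k j))) by (intros; ring).
    rewrite rsum_scal, dst_orthogonal by assumption.
    destruct (Nat.eqb i j); ring.
Qed.

Lemma Lmul_rsum_dst Sl d n (a : nat -> R) i :
  Lmul Sl d (fun j => rsum n (fun k => a k * dst d k j)) i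
  = rsum n (fun k => a k * Lmul Sl d (dst d k) i).
Proof.
  induction n as [|n IH]; simpl.
  - unfold Lmul. destruct i; destruct (Nat.ltb _ d); unfold Rdiv; ring.
  - rewrite <- IH. unfold Lmul. destruct i; destruct (Nat.ltb _ d); unfold Rdiv; ring.
Qed.

Lemma Linv_spec Sl d p i : 0 < Sl -> (i < d)%nat -> Lmul Sl d (Linv Sl d p) i = p i.
Proof.
  intros HS Hi. unfold Linv. revert i Hi. apply epsilon_spec.
  exists (fun j => rsum d (fun k => (2 / INR (d + 1) * (coef d k p / eigval Sl d k)) * dst d k j)).
  intros i Hi. rewrite Lmul_rsum_dst, <- (dst_inversion d p i Hi), <- rsum_scal.
  apply rsum_ext. intros k Hk. rewrite Lmul_dst by assumption.
  pose proof (INR_succ_pos d). pose proof (eigval_neg Sl d k HS Hk).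
  field. lra.
Qed.

Lemma coef_Linv Sl d k p : 0 < Sl -> (k < d)%nat ->
  coef d k (Linv Sl d p) = coef d k p / eigval Sl d k.
Proof.
  intros HS Hk. pose proof (eigval_neg Sl d k HS Hk).
  apply (Rmult_eq_reg_l (eigval Sl d k)); [| lra].
  rewrite <- coef_Lmul. field_simplify; [| lra].
  unfold coef, vdot. apply rsum_ext. intros. rewrite Linv_spec; auto.
Qed.

(** * Linear ODEs *)

Lemma derivable_pt_lim_scal_id r s : derivable_pt_lim (fun t => r * t) s r.
Proof.
  pose proof (derivable_pt_lim_scal id r s 1 (derivable_pt_lim_id s)) as H.
  rewrite Rmult_1_r in H. exact H.
Qed.

(* [w t * exp (- K t)] is nonincreasing, nonnegative and vanishes at 0. *)
Lemma Gronwall_zero (w w' : R -> R) K :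
  (forall s, derivable_pt_lim w s (w' s)) -> (forall s, w' s <= K * w s) ->
  (forall s, 0 <= w s) -> w 0 = 0 -> forall t, 0 <= t -> w t = 0.
Proof.
  intros Dw Hw Hpos w0 t [Ht | <-]; [| exact w0].
  set (g := fun s => w s * exp (- K * s)).
  set (g' := fun s => w' s * exp (- K * s) + w s * (exp (- K * s) * - K)).
  assert (Dg : forall s, derivable_pt_lim g s (g' s)).
  { intros s. apply (derivable_pt_lim_mult w (fun s => exp (- K * s))); [apply Dw|].
    apply (derivable_pt_lim_comp (fun s => - K * s) exp);
      [apply derivable_pt_lim_scal_id | apply derivable_pt_lim_exp]. }
  destruct (MVT_cor2 g g' 0 t Ht (fun c _ => Dg c)) as [c0 [E _]].
  assert (g' c0 <= 0).
  { unfold g'. pose proof (exp_pos (- K * c0)). pose proof (Hw c0). nra. }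
  pose proof (exp_pos (- K * t)). pose proof (Hpos t).
  unfold g in E. rewrite w0, Rmult_0_l, Rminus_0_r in E. nra.
Qed.

Lemma linear_ode2_zero (e f : R -> R) al be :
  (forall t, derivable_pt_lim e t (al * f t)) -> (forall t, derivable_pt_lim f t (be * e t)) ->
  e 0 = 0 -> f 0 = 0 -> forall t, 0 <= t -> e t = 0 /\ f t = 0.
Proof.
  intros De Df e0 f0 t Ht.
  assert (Hw : e t * e t + f t * f t = 0).
  { apply (Gronwall_zero (fun s => e s * e s + f s * f s) (fun s => 2 * (al + be) * e s * f s)
             (Rabs (al + be))); auto.
    - intros s.
      replace (2 * (al + be) * e s * f s)
        with ((al * f s * e s + e s * (al * f s)) + (be * e s * f s + f s * (be * e s))) by ring.
      apply (derivable_pt_lim_plus (fun s => e s * e s) (fun s => f s * f s));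
        apply derivable_pt_lim_mult; auto.
    - intros s.
      assert (Rabs (2 * e s * f s) <= e s * e s + f s * f s).
      { apply Rabs_le. pose proof (pow2_ge_0 (e s - f s)). pose proof (pow2_ge_0 (e s + f s)). nra. }
      pose proof (Rle_abs ((al + be) * (2 * e s * f s))) as Habs.
      rewrite Rabs_mult in Habs. pose proof (Rabs_pos (al + be)). nra.
    - intros s. nra.
    - rewrite e0, f0. ring. }
  split; nra.
Qed.

Lemma linear_ode2_unique (e1 f1 e2 f2 : R -> R) al be :
  (forall t, derivable_pt_lim e1 t (al * f1 t)) -> (forall t, derivable_pt_lim f1 t (be * e1 t)) ->
  (forall t, derivable_pt_lim e2 t (al * f2 t)) -> (forall t, derivable_pt_lim f2 t (be * e2 t)) ->
  e1 0 = e2 0 -> f1 0 = f2 0 -> forall t, 0 <= t -> e1 t = e2 t /\ f1 t = f2 t.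
Proof.
  intros D1 D2 D3 D4 I1 I2 t Ht.
  destruct (linear_ode2_zero (fun s => e1 s - e2 s) (fun s => f1 s - f2 s) al be)
    with (t := t) as [A B]; auto; try lra.
  - intros s. replace (al * (f1 s - f2 s)) with (al * f1 s - al * f2 s) by ring.
    apply (derivable_pt_lim_minus e1 e2); auto.
  - intros s. replace (be * (e1 s - e2 s)) with (be * e1 s - be * e2 s) by ring.
    apply (derivable_pt_lim_minus f1 f2); auto.
Qed.

(** * The split flows in sine coordinates *)

Lemma coef_flow_derivable d (f : state -> state) F x k t : is_flow d f F ->
  derivable_pt_lim (fun s => coef d k (fst (F s x))) t (coef d k (fst (f (F t x)))) /\
  derivable_pt_lim (fun s => coef d k (snd (F s x))) t (coef d k (snd (f (F t x)))).
Proof.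
  intros H. destruct (H x) as [_ H2].
  split; apply (rsum_derivable d (dst d k) (fun i s => _ (F s x) i)); intros i Hi; apply (H2 t i Hi).
Qed.

Lemma coef_flow_0 d (f : state -> state) F x k : is_flow d f F ->
  coef d k (fst (F 0 x)) = coef d k (fst x) /\ coef d k (snd (F 0 x)) = coef d k (snd x).
Proof.
  intros H. destruct (H x) as [H1 _].
  split; apply rsum_ext; intros i Hi; destruct (H1 i Hi) as [E1 E2]; rewrite ?E1, ?E2; reflexivity.
Qed.

Lemma coef_scal d k r u : coef d k (fun i => r * u i) = r * coef d k u.
Proof. unfold coef, vdot. rewrite <- rsum_scal. apply rsum_ext. intros; ring. Qed.

Lemma coef_opp d k u : coef d k (fun i => - u i) = - coef d k u.
Proof.
  unfold coef, vdot. replace (- rsum d _) with (-1 * rsum d (fun i => dst d k i * u i)) by ring.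
  rewrite <- rsum_scal. apply rsum_ext. intros; ring.
Qed.

Lemma coef_minus d k u v : coef d k (fun i => u i - v i) = coef d k u - coef d k v.
Proof. unfold coef, vdot. rewrite <- rsum_minus. apply rsum_ext. intros; ring. Qed.

Section SplitFlows.
Variables (Sl : R) (d : nat) (c : R).
Hypothesis HS : 0 < Sl.

Lemma coef_fieldA k y : (k < d)%nat ->
  coef d k (fst (fieldA Sl d c y)) = - coef d k (snd y) / eigval Sl d k /\
  coef d k (snd (fieldA Sl d c y)) = c ^ 2 * eigval Sl d k * coef d k (fst y).
Proof.
  intros Hk. simpl. rewrite coef_opp, coef_scal, coef_Linv, coef_Lmul by assumption.
  split; [unfold Rdiv |]; ring.
Qed.

Lemma coef_fieldB k y :
  coef d k (fst (fieldB Sl d c y)) = 0 /\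
  coef d k (snd (fieldB Sl d c y)) = ((1 - c ^ 2) * eigval Sl d k - 1) * coef d k (fst y).
Proof.
  simpl. rewrite coef_minus, coef_scal, coef_Lmul. split; [| ring].
  unfold coef, vdot. rewrite (rsum_ext d _ (fun _ => 0)), rsum_const by (intros; ring). ring.
Qed.

(* [Sf] and [Cf] play the roles of sin (c t) / c and cos (c t), also when c = 0. *)
Lemma coef_flowA FA (Sf Cf : R -> R) x k t :
  is_flow d (fieldA Sl d c) FA -> (k < d)%nat ->
  (forall s, derivable_pt_lim Sf s (Cf s)) -> (forall s, derivable_pt_lim Cf s (- c ^ 2 * Sf s)) ->
  Sf 0 = 0 -> Cf 0 = 1 -> 0 <= t ->
  coef d k (fst (FA t x)) = coef d k (fst x) * Cf t - coef d k (snd x) / eigval Sl d k * Sf t /\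
  coef d k (snd (FA t x)) = c ^ 2 * eigval Sl d k * coef d k (fst x) * Sf t + coef d k (snd x) * Cf t.
Proof.
  intros HF Hk DS DC S0 C0 Ht.
  pose proof (eigval_neg Sl d k HS Hk) as Hl.
  set (a := coef d k (fst x)). set (b := coef d k (snd x)). set (l := eigval Sl d k) in *.
  apply (linear_ode2_unique (fun s => coef d k (fst (FA s x))) (fun s => coef d k (snd (FA s x)))
    (fun s => a * Cf s - b / l * Sf s) (fun s => c ^ 2 * l * a * Sf s + b * Cf s) (- / l) (c ^ 2 * l));
    auto.
  - intros s. destruct (coef_flow_derivable d _ FA x k s HF) as [D _].
    destruct (coef_fieldA k (FA s x) Hk) as [E _]. rewrite E in D.
    replace (- / l * coef d k (snd (FA s x))) with (- coef d k (snd (FA s x)) / l) by (unfold Rdiv; ring).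
    exact D.
  - intros s. destruct (coef_flow_derivable d _ FA x k s HF) as [_ D].
    destruct (coef_fieldA k (FA s x) Hk) as [_ E]. rewrite E in D. exact D.
  - intros s. replace (- / l * (c ^ 2 * l * a * Sf s + b * Cf s))
      with (a * (- c ^ 2 * Sf s) - b / l * Cf s) by (field; lra).
    apply (derivable_pt_lim_minus (fun s => a * Cf s) (fun s => b / l * Sf s));
      apply derivable_pt_lim_scal; auto.
  - intros s. replace (c ^ 2 * l * (a * Cf s - b / l * Sf s))
      with (c ^ 2 * l * a * Cf s + b * (- c ^ 2 * Sf s)) by (field; lra).
    apply (derivable_pt_lim_plus (fun s => c ^ 2 * l * a * Sf s) (fun s => b * Cf s));
      apply derivable_pt_lim_scal; auto.
  - destruct (coef_flow_0 d _ FA x k HF) as [-> _]. rewrite S0, C0. unfold a. ring.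
  - destruct (coef_flow_0 d _ FA x k HF) as [_ ->]. rewrite S0, C0. unfold b. ring.
Qed.

Lemma coef_flowB FB x k t :
  is_flow d (fieldB Sl d c) FB -> 0 <= t ->
  coef d k (fst (FB t x)) = coef d k (fst x) /\
  coef d k (snd (FB t x)) =
    coef d k (snd x) + t * ((1 - c ^ 2) * eigval Sl d k - 1) * coef d k (fst x).
Proof.
  intros HF Ht.
  set (a := coef d k (fst x)). set (b := coef d k (snd x)).
  set (K := (1 - c ^ 2) * eigval Sl d k - 1).
  apply (linear_ode2_unique (fun s => coef d k (fst (FB s x))) (fun s => coef d k (snd (FB s x)))
    (fun _ => a) (fun s => b + s * K * a) 0 K); auto.
  - intros s. destruct (coef_flow_derivable d _ FB x k s HF) as [D _].
    destruct (coef_fieldB k (FB s x)) as [E _]. rewrite E in D. rewrite Rmult_0_l. exact D.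
  - intros s. destruct (coef_flow_derivable d _ FB x k s HF) as [_ D].
    destruct (coef_fieldB k (FB s x)) as [_ E]. rewrite E in D. exact D.
  - intros s. rewrite Rmult_0_l. apply (derivable_pt_lim_const a).
  - intros s. replace (K * a) with (0 + K * a) by ring.
    apply (derivable_pt_lim_plus (fun _ => b) (fun s => s * K * a)); [apply derivable_pt_lim_const|].
    apply (derivable_pt_lim_ext (fun s => (K * a) * s)); [intros; ring | apply derivable_pt_lim_scal_id].
  - destruct (coef_flow_0 d _ FB x k HF) as [-> _]. reflexivity.
  - destruct (coef_flow_0 d _ FB x k HF) as [_ ->]. unfold b. ring.
Qed.

End SplitFlows.

(** * Bounded orbits *)

Definition mode_norm (d k : nat) (y : state) : R :=
  Rabs (coef d k (fst y)) + Rabs (coef d k (snd y)).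

Lemma Rabs_dst_le1 d k i : Rabs (dst d k i) <= 1.
Proof. apply Rabs_le. pose proof (SIN_bound (INR (i + 1) * kappa d k)). unfold dst. lra. Qed.

Lemma Rabs_coef_le d k u : Rabs (coef d k u) <= rsum d (fun i => Rabs (u i)).
Proof.
  eapply Rle_trans; [apply rsum_abs | apply rsum_le]. intros i _.
  rewrite Rabs_mult. pose proof (Rabs_dst_le1 d k i). pose proof (Rabs_pos (u i)). nra.
Qed.

Lemma mode_norm_le_snorm d k y : mode_norm d k y <= snorm d y.
Proof.
  unfold mode_norm, snorm. rewrite rsum_plus.
  pose proof (Rabs_coef_le d k (fst y)). pose proof (Rabs_coef_le d k (snd y)). lra.
Qed.

Lemma Rabs_le_rsum_coef d u i : (1 <= d)%nat -> (i < d)%nat ->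
  Rabs (u i) <= rsum d (fun k => Rabs (coef d k u)).
Proof.
  intros Hd Hi. rewrite <- (dst_inversion d u i Hi), Rabs_mult.
  assert (H2 : 0 <= 2 / INR (d + 1) <= 1).
  { pose proof (INR_succ_pos d). assert (1 <= INR d) by (apply (le_INR 1); exact Hd).
    rewrite (plus_INR d 1) in *. simpl in *. split.
    - left. apply Rdiv_lt_0_compat; lra.
    - apply Rmult_le_reg_r with (INR d + 1); [lra|]. field_simplify; lra. }
  rewrite (Rabs_right (2 / INR (d + 1))) by lra.
  assert (Rabs (rsum d (fun k => dst d k i * coef d k u)) <= rsum d (fun k => Rabs (coef d k u))).
  { eapply Rle_trans; [apply rsum_abs | apply rsum_le]. intros k _.
    rewrite Rabs_mult. pose proof (Rabs_dst_le1 d k i). pose proof (Rabs_pos (coef d k u)). nra. }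
  pose proof (Rabs_pos (rsum d (fun k => dst d k i * coef d k u))). nra.
Qed.

Lemma snorm_le_mode_norms d y : (1 <= d)%nat ->
  snorm d y <= INR d * rsum d (fun k => mode_norm d k y).
Proof.
  intros Hd. unfold snorm. rewrite <- rsum_const. apply rsum_le. intros i Hi.
  unfold mode_norm. rewrite rsum_plus.
  pose proof (Rabs_le_rsum_coef d (fst y) i Hd Hi). pose proof (Rabs_le_rsum_coef d (snd y) i Hd Hi). lra.
Qed.

(* On the ellipse [P a^2 + m b^2 = const] the l^2 norm varies at most by the factor
   (P + m) (/P + /m); the constant below avoids square roots. *)
Lemma ellipse_l1_bound P m a b a0 b0 : 0 < P -> 0 < m ->
  P * a ^ 2 + m * b ^ 2 = P * a0 ^ 2 + m * b0 ^ 2 ->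
  Rabs a + Rabs b <= (1 + 2 * ((P + m) * (/ P + / m))) * (Rabs a0 + Rabs b0).
Proof.
  intros HP Hm E. set (rho := (P + m) * (/ P + / m)).
  pose proof (Rinv_0_lt_compat P HP). pose proof (Rinv_0_lt_compat m Hm).
  assert (Hr : 0 <= rho) by (unfold rho; nra).
  assert (E1 : a ^ 2 + b ^ 2 <= (/ P + / m) * (P * a ^ 2 + m * b ^ 2)).
  { replace ((/ P + / m) * (P * a ^ 2 + m * b ^ 2))
      with (a ^ 2 + b ^ 2 + (P / m) * a ^ 2 + (m / P) * b ^ 2) by (field; lra).
    assert (0 <= P / m) by (left; apply Rdiv_lt_0_compat; lra).
    assert (0 <= m / P) by (left; apply Rdiv_lt_0_compat; lra).
    pose proof (pow2_ge_0 a). pose proof (pow2_ge_0 b). nra. }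
  assert (E2 : P * a0 ^ 2 + m * b0 ^ 2 <= (P + m) * (a0 ^ 2 + b0 ^ 2))
    by (pose proof (pow2_ge_0 a0); pose proof (pow2_ge_0 b0); nra).
  assert (E3 : a ^ 2 + b ^ 2 <= rho * (a0 ^ 2 + b0 ^ 2)).
  { rewrite E in E1. unfold rho.
    replace ((P + m) * (/ P + / m) * (a0 ^ 2 + b0 ^ 2))
      with ((/ P + / m) * ((P + m) * (a0 ^ 2 + b0 ^ 2))) by ring.
    eapply Rle_trans; [exact E1 | apply Rmult_le_compat_l; lra]. }
  set (X := Rabs a + Rabs b). set (Y := Rabs a0 + Rabs b0).
  pose proof (Rabs_pos a). pose proof (Rabs_pos b). pose proof (Rabs_pos a0). pose proof (Rabs_pos b0).
  assert (X ^ 2 <= 2 * (a ^ 2 + b ^ 2)).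
  { unfold X. rewrite <- (pow2_abs a), <- (pow2_abs b). pose proof (pow2_ge_0 (Rabs a - Rabs b)). nra. }
  assert (a0 ^ 2 + b0 ^ 2 <= Y ^ 2) by (unfold Y; rewrite <- (pow2_abs a0), <- (pow2_abs b0); nra).
  assert (X ^ 2 <= ((1 + 2 * rho) * Y) ^ 2) by (unfold X, Y in *; nra).
  apply Rsqr_incr_0_var; [rewrite !Rsqr_pow2; assumption | unfold Y; nra].
Qed.

(** * Stability of the Strang splitting *)

Section Strang.
Variables (Sl : R) (d : nat) (c h : R) (FA FB : R -> state -> state) (Sf Cf : R -> R).
Hypotheses (HS : 0 < Sl) (Hd : (1 <= d)%nat) (Hh : 0 < h)
  (HFA : is_flow d (fieldA Sl d c) FA) (HFB : is_flow d (fieldB Sl d c) FB)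
  (DS : forall s, derivable_pt_lim Sf s (Cf s)) (DC : forall s, derivable_pt_lim Cf s (- c ^ 2 * Sf s))
  (S0 : Sf 0 = 0) (C0 : Cf 0 = 1) (HSC : Cf h ^ 2 + c ^ 2 * Sf h ^ 2 = 1) (HSp : 0 < Sf h).

Definition kick (k : nat) : R := (1 - c ^ 2) * eigval Sl d k - 1.

Definition strang_diag (k : nat) : R := Cf h - h / 2 * kick k * Sf h / eigval Sl d k.
Definition strang_up (k : nat) : R := - Sf h / eigval Sl d k.
Definition strang_low (k : nat) : R :=
  c ^ 2 * eigval Sl d k * Sf h + h / 2 * kick k * Cf h + h / 2 * kick k * strang_diag k.

Lemma coef_strang k x : (k < d)%nat ->
  coef d k (fst (strang FA FB h x)) = strang_diag k * coef d k (fst x) + strang_up k * coef d k (snd x) /\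
  coef d k (snd (strang FA FB h x)) = strang_low k * coef d k (fst x) + strang_diag k * coef d k (snd x).
Proof.
  intros Hk. unfold strang. pose proof (eigval_neg Sl d k HS Hk).
  destruct (coef_flowB Sl d c FB x k (h / 2) HFB ltac:(lra)) as [B1 B2].
  destruct (coef_flowA Sl d c HS FA Sf Cf (FB (h / 2) x) k h HFA Hk DS DC S0 C0 ltac:(lra)) as [A1 A2].
  destruct (coef_flowB Sl d c FB (FA h (FB (h / 2) x)) k (h / 2) HFB ltac:(lra)) as [B3 B4].
  rewrite B3, B4, A1, A2, B1, B2. unfold strang_low, strang_diag, strang_up, kick.
  split; field; lra.
Qed.

Lemma strang_det k : (k < d)%nat -> strang_diag k ^ 2 - strang_up k * strang_low k = 1.
Proof.
  intros Hk. pose proof (eigval_neg Sl d k HS Hk).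
  rewrite <- HSC. unfold strang_low, strang_up, strang_diag. field. lra.
Qed.

(* A 2x2 matrix with equal diagonal entries and determinant 1 preserves this form. *)
Definition strang_energy (k : nat) (y : state) : R :=
  - strang_low k * coef d k (fst y) ^ 2 + strang_up k * coef d k (snd y) ^ 2.

Lemma strang_energy_step k x : (k < d)%nat -> strang_energy k (strang FA FB h x) = strang_energy k x.
Proof.
  intros Hk. unfold strang_energy. destruct (coef_strang k x Hk) as [-> ->].
  pose proof (strang_det k Hk) as D.
  transitivity ((strang_diag k ^ 2 - strang_up k * strang_low k)
                * (- strang_low k * coef d k (fst x) ^ 2 + strang_up k * coef d k (snd x) ^ 2));
    [ring | rewrite D; ring].
Qed.

Lemma strang_energy_iter k n x : (k < d)%nat ->
  strang_energy k (Nat.iter n (strang FA FB h) x) = strang_energy k x.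
Proof.
  intros Hk. induction n as [|n IH]; [reflexivity|]. simpl. rewrite strang_energy_step; assumption.
Qed.

Hypothesis Hdiag : forall k, (k < d)%nat -> strang_diag k ^ 2 < 1.

Lemma strang_up_pos k : (k < d)%nat -> 0 < strang_up k.
Proof.
  intros Hk. pose proof (eigval_neg Sl d k HS Hk). unfold strang_up.
  replace (- Sf h / eigval Sl d k) with (Sf h / - eigval Sl d k) by (field; lra).
  apply Rdiv_lt_0_compat; lra.
Qed.

Lemma strang_low_neg k : (k < d)%nat -> strang_low k < 0.
Proof.
  intros Hk. pose proof (strang_up_pos k Hk). pose proof (strang_det k Hk). pose proof (Hdiag k Hk).
  nra.
Qed.

Definition mode_growth (k : nat) : R :=
  1 + 2 * ((- strang_low k + strang_up k) * (/ - strang_low k + / strang_up k)).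

Lemma mode_growth_nonneg k : (k < d)%nat -> 0 <= mode_growth k.
Proof.
  intros Hk. pose proof (strang_low_neg k Hk) as Hl. pose proof (strang_up_pos k Hk) as Hu.
  pose proof (Rinv_0_lt_compat (- strang_low k) ltac:(lra)). pose proof (Rinv_0_lt_compat _ Hu).
  unfold mode_growth. nra.
Qed.

Lemma mode_norm_iter k n x : (k < d)%nat ->
  mode_norm d k (Nat.iter n (strang FA FB h) x) <= mode_growth k * mode_norm d k x.
Proof.
  intros Hk. apply ellipse_l1_bound.
  - pose proof (strang_low_neg k Hk). lra.
  - apply strang_up_pos, Hk.
  - apply (strang_energy_iter k n x Hk).
Qed.

Lemma strang_stable : exists M : R, forall (n : nat) (x : state),
  snorm d (Nat.iter n (strang FA FB h) x) <= M * snorm d x.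
Proof.
  exists (INR d * rsum d mode_growth). intros n x.
  eapply Rle_trans; [apply snorm_le_mode_norms, Hd|].
  rewrite Rmult_assoc. apply Rmult_le_compat_l; [apply pos_INR|].
  rewrite Rmult_comm, <- rsum_scal. apply rsum_le. intros k Hk.
  eapply Rle_trans; [apply mode_norm_iter, Hk|]. rewrite Rmult_comm.
  apply Rmult_le_compat_r; [apply mode_growth_nonneg, Hk | apply mode_norm_le_snorm].
Qed.

End Strang.

Lemma strang_diag_eq Sl d c h Sf Cf k : 0 < Sl -> (k < d)%nat ->
  strang_diag Sl d c h Sf Cf k = Cf h - h / 2 * ((1 - c ^ 2) + / - eigval Sl d k) * Sf h.
Proof.
  intros HS Hk. pose proof (eigval_neg Sl d k HS Hk).
  unfold strang_diag, kick. field. lra.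
Qed.

(* With tan phi = A one has cos th - A sin th = cos (th + phi) / cos phi, and
   phi < th + phi < PI - phi. *)
Lemma sqr_cos_sub_mul_sin_lt1 th A : 0 < th -> 0 < A -> th + 2 * atan A < PI ->
  (cos th - A * sin th) ^ 2 < 1.
Proof.
  intros Ht HA Hc. set (phi := atan A) in Hc.
  assert (Hp : 0 < phi) by (unfold phi; rewrite <- atan_0; apply atan_increasing, HA).
  assert (Hp2 : phi < PI / 2) by apply atan_bound.
  assert (Hcp : 0 < cos phi) by (apply cos_gt_0; lra).
  assert (E : cos th - A * sin th = cos (th + phi) / cos phi).
  { rewrite <- (tan_atan A) at 1. fold phi. unfold tan. rewrite cos_plus. field. lra. }
  assert (cos (th + phi) < cos phi) by (apply cos_decreasing_1; lra).
  assert (cos (PI - phi) < cos (th + phi)) by (apply cos_decreasing_1; lra).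
  rewrite Rtrigo_facts.cos_pi_minus in *. rewrite E.
  replace ((cos (th + phi) / cos phi) ^ 2) with (cos (th + phi) ^ 2 / cos phi ^ 2) by (field; lra).
  apply Rmult_lt_reg_r with (cos phi ^ 2); [nra|]. field_simplify; nra.
Qed.

Lemma splitting_diag_sqr_lt1 c h w1 w : 0 < c <= 1 -> 0 < h -> 0 < w1 <= w ->
  c * h + 2 * atan (h * (1 + (1 - c ^ 2) * w1) / (2 * c * w1)) < PI ->
  (cos (c * h) - h / 2 * ((1 - c ^ 2) + / w) * (sin (c * h) / c)) ^ 2 < 1.
Proof.
  intros Hc Hh Hw Hcond. set (A := h / (2 * c) * ((1 - c ^ 2) + / w)).
  replace (cos (c * h) - h / 2 * ((1 - c ^ 2) + / w) * (sin (c * h) / c))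
    with (cos (c * h) - A * sin (c * h)) by (unfold A; field; lra).
  pose proof (Rinv_0_lt_compat w ltac:(lra)).
  assert (HA : 0 < A) by (apply Rmult_lt_0_compat; [apply Rdiv_lt_0_compat |]; nra).
  assert (HA1 : A <= h * (1 + (1 - c ^ 2) * w1) / (2 * c * w1)).
  { replace (h * (1 + (1 - c ^ 2) * w1) / (2 * c * w1)) with (h / (2 * c) * ((1 - c ^ 2) + / w1))
      by (field; lra).
    apply Rmult_le_compat_l; [left; apply Rdiv_lt_0_compat; lra|].
    apply Rplus_le_compat_l, Rinv_le_contravar; lra. }
  apply sqr_cos_sub_mul_sin_lt1; [nra | exact HA |].
  destruct HA1 as [HA1 | ->]; [pose proof (atan_increasing _ _ HA1) |]; lra.
Qed.

Lemma splitting_sin_pos c h w1 : 0 < c <= 1 -> 0 < h -> 0 < w1 ->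
  c * h + 2 * atan (h * (1 + (1 - c ^ 2) * w1) / (2 * c * w1)) < PI -> 0 < sin (c * h) / c.
Proof.
  intros Hc Hh Hw Hcond.
  assert (0 <= (1 - c ^ 2) * w1) by (apply Rmult_le_pos; nra).
  assert (0 < h * (1 + (1 - c ^ 2) * w1) / (2 * c * w1))
    by (apply Rdiv_lt_0_compat; [apply Rmult_lt_0_compat |]; nra).
  assert (0 < atan (h * (1 + (1 - c ^ 2) * w1) / (2 * c * w1)))
    by (rewrite <- atan_0; apply atan_increasing; assumption).
  apply Rdiv_lt_0_compat; [apply sin_gt_0 |]; nra.
Qed.

Lemma verlet_diag_sqr_lt1 h w1 w : 0 < h -> 0 < w1 <= w -> h ^ 2 * (1 + w1) < 4 * w1 ->
  (1 - h / 2 * (1 + / w) * h) ^ 2 < 1.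
Proof.
  intros Hh Hw Hcond.
  assert (E : 1 - h / 2 * (1 + / w) * h = 1 - h ^ 2 * (w + 1) / (2 * w)) by (field; lra).
  assert (h ^ 2 * (w + 1) < 4 * w) by nra.
  assert (0 < h ^ 2 * (w + 1) / (2 * w)) by (apply Rdiv_lt_0_compat; nra).
  assert (h ^ 2 * (w + 1) / (2 * w) < 2)
    by (apply Rmult_lt_reg_r with (2 * w); [lra|]; field_simplify; nra).
  rewrite E. nra.
Qed.

Lemma verlet_step_condition om h : 0 < h -> h < 2 * om / sqrt (1 + om ^ 2) ->
  h ^ 2 * (1 + om ^ 2) < 4 * om ^ 2.
Proof.
  intros Hh Hlt. pose proof (pow2_ge_0 om).
  assert (Hq : 0 < sqrt (1 + om ^ 2)) by (apply sqrt_lt_R0; lra).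
  assert (Hhq : h * sqrt (1 + om ^ 2) < 2 * om).
  { apply Rmult_lt_reg_r with (/ sqrt (1 + om ^ 2)); [apply Rinv_0_lt_compat, Hq|].
    rewrite Rmult_assoc, Rinv_r, Rmult_1_r by lra. exact Hlt. }
  assert (0 < h * sqrt (1 + om ^ 2)) by (apply Rmult_lt_0_compat; lra).
  replace (h ^ 2 * (1 + om ^ 2)) with ((h * sqrt (1 + om ^ 2)) ^ 2)
    by (rewrite Rpow_mult_distr, pow2_sqrt; lra).
  nra.
Qed.

Lemma scaled_sin_derivable c s : c <> 0 ->
  derivable_pt_lim (fun t => sin (c * t) / c) s (cos (c * s)).
Proof.
  intros Hc. apply (derivable_pt_lim_ext (mult_real_fct (/ c) (comp sin (fun t => c * t)))).
  { intros t. unfold mult_real_fct, comp, Rdiv. ring. }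
  replace (cos (c * s)) with (/ c * (cos (c * s) * c)) by (field; exact Hc).
  apply derivable_pt_lim_scal, (derivable_pt_lim_comp (fun t => c * t) sin);
    [apply derivable_pt_lim_scal_id | apply derivable_pt_lim_sin].
Qed.

Lemma scaled_cos_derivable c s : c <> 0 ->
  derivable_pt_lim (fun t => cos (c * t)) s (- c ^ 2 * (sin (c * s) / c)).
Proof.
  intros Hc. replace (- c ^ 2 * (sin (c * s) / c)) with (- sin (c * s) * c) by (field; exact Hc).
  apply (derivable_pt_lim_comp (fun t => c * t) cos);
    [apply derivable_pt_lim_scal_id | apply derivable_pt_lim_cos].
Qed.

Theorem theorem8p1 (Sl : R) (d : nat) (c h : R)
  (FA FB : R -> state -> state)
  (HS : 0 < Sl) (Hd : (1 <= d)%nat) (Hc : 0 <= c <= 1) (Hh : 0 < h)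
  (HFA : is_flow d (fieldA Sl d c) FA)
  (HFB : is_flow d (fieldB Sl d c) FB)
  (Hcond :
     (0 < c ->
      c * h + 2 * atan (h * (1 + (1 - c ^ 2) * omega1 Sl d ^ 2)
                        / (2 * c * omega1 Sl d ^ 2)) < PI) /\
     (c = 0 ->
      h < 2 * omega1 Sl d / sqrt (1 + omega1 Sl d ^ 2))) :
  exists M : R, forall (n : nat) (x : state),
    snorm d (Nat.iter n (strang FA FB h) x) <= M * snorm d x.
Proof.
  pose proof (eigval_neg Sl d 0 HS ltac:(lia)).
  assert (Hw : forall k, (k < d)%nat -> 0 < omega1 Sl d ^ 2 <= - eigval Sl d k).
  { intros k Hk. pose proof (eigval_le_eigval0 Sl d k HS Hk). rewrite omega1_sqr by exact HS. lra. }
  destruct Hcond as [Hpos Hzero]. destruct (Req_dec c 0) as [-> | Hc0].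
  - specialize (Hzero eq_refl).
    apply (strang_stable Sl d 0 h FA FB (fun t => t) (fun _ => 1)); auto.
    + intros s. apply derivable_pt_lim_id.
    + intros s. rewrite pow_i, Ropp_0, Rmult_0_l by lia. apply derivable_pt_lim_const.
    + ring.
    + intros k Hk. rewrite strang_diag_eq by assumption.
      replace (1 - 0 ^ 2) with 1 by ring.
      apply (verlet_diag_sqr_lt1 h (omega1 Sl d ^ 2)); auto.
      apply verlet_step_condition; assumption.
  - assert (Hcp : 0 < c) by lra. specialize (Hpos Hcp).
    apply (strang_stable Sl d c h FA FB (fun t => sin (c * t) / c) (fun t => cos (c * t))); auto.
    + intros s. apply scaled_sin_derivable, Hc0.
    + intros s. apply scaled_cos_derivable, Hc0.
    + rewrite Rmult_0_r, sin_0. field. exact Hc0.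
    + rewrite Rmult_0_r. apply cos_0.
    + pose proof (sin2_cos2 (c * h)) as E. unfold Rsqr in E. field_simplify; lra.
    + apply (splitting_sin_pos c h (omega1 Sl d ^ 2)); try lra. apply (Hw 0%nat). lia.
    + intros k Hk. rewrite strang_diag_eq by assumption.
      apply (splitting_diag_sqr_lt1 c h (omega1 Sl d ^ 2)); auto. lra.
Qed.
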